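(* A canonical closed term $t$ of $\Psi$ is in normal form (with respect to $\Psi$) if and only if $\langle\!\langle t\rangle\!\rangle_\Psi$ is in $\rightarrow_h$-normal form.
   Context: $\lambda$-terms: $M::=x\mid\lambda x.M\mid MN$, variables from a set $\Upsilon$ with a fixed total order, $FV(M)$ the ordered sequence of free variables. Weak call-by-name reduction: $(\lambda x.M)N\rightarrow_h M\{N/x\}$, closed under $M\rightarrow_h N\Rightarrow ML\rightarrow_h NL$. $\Psi$: binary function symbol $\mathbf{app}$, binary constructor $\mathbf{capp}$, constructors $c_{x,M}$ ($M$ a $\lambda$-term, $x\in\Upsilon$) of arity the length of $FV(\lambda x.M)$. Translations: $[\![x]\!]'=x$, $[\![\lambda x.M]\!]'=c_{x,M}(x_1,\dots,x_n)$ ($FV(\lambda x.M)=x_1,\dots,x_n$), $[\![MN]\!]'=\mathbf{capp}([\![M]\!]',[\![N]\!]')$; $[\![x]\!]_\Psi=x$, $[\![\lambda x.M]\!]_\Psi=c_{x,M}(x_1,\dots,x_n)$, $[\![MN]\!]_\Psi=\mathbf{app}([\![M]\!]_\Psi,[\![N]\!]')$. Rules (any $\lambda$-term $M$, any abstraction or application $N$, distinct variables $z,w$): $\mathbf{app}(c_{z,z},\mathbf{capp}(w,f))\rightarrow\mathbf{app}(w,f)$; $\mathbf{app}(c_{z,z},c_{x,M}(x_1,\dots,x_n))\rightarrow c_{x,M}(x_1,\dots,x_n)$; $\mathbf{app}(c_{z,w}(\mathbf{capp}(f,g)),h)\rightarrow\mathbf{app}(f,g)$; $\mathbf{app}(c_{z,w}(c_{x,M}(x_1,\dots,x_n)),h)\rightarrow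 c_{x,M}(x_1,\dots,x_n)$; $\mathbf{app}(c_{y,N}(y_1,\dots,y_m),y)\rightarrow[\![N]\!]_\Psi$ ($FV(\lambda y.N)=y_1,\dots,y_m$); $\mathbf{app}(\mathbf{capp}(x,y),z)\rightarrow\mathbf{app}(\mathbf{app}(x,y),z)$. Rewriting is call-by-value: a step replaces anywhere a subterm $l\sigma$ by $r\sigma$, $\sigma$ mapping variables to constructor terms (closed terms built only from $\mathbf{capp}$ and the $c_{x,M}$). A term is in normal form if no step applies. Back translation: $\langle\!\langle x\rangle\!\rangle_\Psi=x$, $\langle\!\langle\mathbf{app}(u,v)\rangle\!\rangle_\Psi=\langle\!\langle\mathbf{capp}(u,v)\rangle\!\rangle_\Psi=\langle\!\langle u\rangle\!\rangle_\Psi\langle\!\langle v\rangle\!\rangle_\Psi$, $\langle\!\langle c_{x,M}(t_1,\dots,t_n)\rangle\!\rangle_\Psi=(\lambda x.M)\{\langle\!\langle t_1\rangle\!\rangle_\Psi/x_1,\dots,\langle\!\langle t_n\rangle\!\rangle_\Psi/x_n\}$. A closed term $t$ is canonical if either $t=c_{x,M}(t_1,\dots,t_n)$ is a constructor term, or $t=\mathbf{app}(u,v)$ with $u$ canonical and $v$ a constructor term. *)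

From mathcomp Require Import all_boot.
Set Implicit Arguments. Unset Strict Implicit. Unset Printing Implicit Defensive.

Inductive term : Type :=
| Var : nat -> term
| Lam : nat -> term -> term
| App : term -> term -> term.

Fixpoint fv_raw (M : term) : seq nat :=
  match M with
  | Var x => [:: x]
  | Lam x M => [seq y <- fv_raw M | y != x]
  | App M N => fv_raw M ++ fv_raw N
  end.

Definition fv (M : term) : seq nat := sort leq (undup (fv_raw M)).

Fixpoint lookup {A : Type} (s : seq (nat * A)) (x : nat) : option A :=
  match s with
  | [::] => None
  | (y, a) :: s' => if x == y then Some a else lookup s' x
  end.

(** Simultaneous substitution of lambda-terms (only ever applied with closed
    substituends in what follows, where no capture can occur). *)
Fixpoint lsubst (s : seq (nat * term)) (M : term) : term :=
  match M with
  | Var x => if lookup s x is Some N then N else Var x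
  | Lam x M => Lam x (lsubst [seq p <- s | p.1 != x] M)
  | App M N => App (lsubst s M) (lsubst s N)
  end.

Inductive hstep : term -> term -> Prop :=
| h_beta x M N : hstep (App (Lam x M) N) (lsubst [:: (x, N)] M)
| h_appl M N L : hstep M N -> hstep (App M L) (App N L).

Definition hnormal (M : term) : Prop := ~ exists N, hstep M N.

(** * The constructor system Psi.
    [PVar x]: variable; [Papp]: function symbol app; [Pcapp]: constructor capp;
    [Pc x M ts]: constructor c_{x,M} applied to ts (arity = size (fv (Lam x M))). *)
Inductive pterm : Type :=
| PVar : nat -> pterm
| Papp : pterm -> pterm -> pterm
| Pcapp : pterm -> pterm -> pterm
| Pc : nat -> term -> seq pterm -> pterm.

Fixpoint cterm (t : pterm) : bool :=
  match t with
  | PVar _ => false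
  | Papp _ _ => false
  | Pcapp u v => cterm u && cterm v
  | Pc x M ts => (size ts == size (fv (Lam x M))) && all cterm ts
  end.

Fixpoint psubst (sigma : nat -> pterm) (t : pterm) : pterm :=
  match t with
  | PVar x => sigma x
  | Papp u v => Papp (psubst sigma u) (psubst sigma v)
  | Pcapp u v => Pcapp (psubst sigma u) (psubst sigma v)
  | Pc x M ts => Pc x M (map (psubst sigma) ts)
  end.

Fixpoint trans' (M : term) : pterm :=
  match M with
  | Var x => PVar x
  | Lam x N => Pc x N (map PVar (fv (Lam x N)))
  | App M N => Pcapp (trans' M) (trans' N)
  end.

Fixpoint transPsi (M : term) : pterm :=
  match M with
  | Var x => PVar x
  | Lam x N => Pc x N (map PVar (fv (Lam x N)))
  | App M N => Papp (transPsi M) (trans' N)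
  end.

Definition is_var (M : term) : bool := if M is Var _ then true else false.

Definition sub_of (s : seq (nat * pterm)) (x : nat) : pterm :=
  if lookup s x is Some t then t else PVar x.

(** Root instances l sigma -> r sigma of the rules of Psi, with sigma mapping
    variables to constructor terms. *)
Inductive prule : pterm -> pterm -> Prop :=
| r_id_capp z w f :
    cterm w -> cterm f ->
    prule (Papp (Pc z (Var z) [::]) (Pcapp w f)) (Papp w f)
| r_id_c z x M ts :
    cterm (Pc x M ts) ->
    prule (Papp (Pc z (Var z) [::]) (Pc x M ts)) (Pc x M ts)
| r_k_capp z w f g h :
    z != w -> cterm f -> cterm g -> cterm h ->
    prule (Papp (Pc z (Var w) [:: Pcapp f g]) h) (Papp f g)
| r_k_c z w x M ts h :
    z != w -> cterm (Pc x M ts) -> cterm h ->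
    prule (Papp (Pc z (Var w) [:: Pc x M ts]) h) (Pc x M ts)
| r_beta y N ts v :
    ~~ is_var N -> cterm (Pc y N ts) -> cterm v ->
    prule (Papp (Pc y N ts) v)
          (psubst (sub_of ((y, v) :: zip (fv (Lam y N)) ts)) (transPsi N))
| r_capp x y z :
    cterm x -> cterm y -> cterm z ->
    prule (Papp (Pcapp x y) z) (Papp (Papp x y) z).

Inductive pstep : pterm -> pterm -> Prop :=
| ps_root t u : prule t u -> pstep t u
| ps_appl t t' u : pstep t t' -> pstep (Papp t u) (Papp t' u)
| ps_appr t u u' : pstep u u' -> pstep (Papp t u) (Papp t u')
| ps_cappl t t' u : pstep t t' -> pstep (Pcapp t u) (Pcapp t' u)
| ps_cappr t u u' : pstep u u' -> pstep (Pcapp t u) (Pcapp t u')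
| ps_c x M ts1 t t' ts2 :
    pstep t t' -> pstep (Pc x M (ts1 ++ t :: ts2)) (Pc x M (ts1 ++ t' :: ts2)).

Definition pnormal (t : pterm) : Prop := ~ exists u, pstep t u.

Fixpoint back (t : pterm) : term :=
  match t with
  | PVar x => Var x
  | Papp u v => App (back u) (back v)
  | Pcapp u v => App (back u) (back v)
  | Pc x M ts => lsubst (zip (fv (Lam x M)) (map back ts)) (Lam x M)
  end.

Inductive canonical : pterm -> Prop :=
| can_c x M ts : cterm (Pc x M ts) -> canonical (Pc x M ts)
| can_app u v : canonical u -> cterm v -> canonical (Papp u v).

From mathcomp Require Import all_boot.

Set Implicit Arguments.
Unset Strict Implicit.
Unset Printing Implicit Defensive.

(* A canonical term is a spine app(...app(c, v1)..., vn) over a constructor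
   term c with constructor-term arguments, and its back translation is the
   spine M N1 ... Nn over an abstraction M.  Constructor terms cannot step and
   abstractions are h-normal, so for n = 0 both sides are normal.  For n = 1 the
   rules of Psi cover every application of a constructor c_{y,N} to a
   constructor term, while the back translation is a beta-redex.  For n > 1
   neither system can reduce at the root nor inside the (normal) last argument,
   so both reduce exactly when the shorter spine does. *)

Lemma cterm_pnormal t : cterm t -> pnormal t.
Proof.
move=> ct [u st]; elim: st ct => {t u} //.
- by move=> t u [].
- by move=> t t' u _ IH /andP[/IH].
- by move=> t u u' _ IH /andP[_ /IH].
- move=> x M ts1 t t' ts2 _ IH /andP[_].
  by rewrite all_cat /= => /and3P[_ /IH].
Qed.

Lemma hnormal_Lam x M : hnormal (Lam x M).
Proof. by case=> N st; inversion st. Qed.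

Lemma not_hnormal_App_Lam x M N : ~ hnormal (App (Lam x M) N).
Proof. by apply; eexists; apply: h_beta. Qed.

Lemma hnormal_App_App M1 M2 N : hnormal (App (App M1 M2) N) <-> hnormal (App M1 M2).
Proof.
split=> nf [L st]; apply: nf.
- by exists (App L N); apply: h_appl.
- by inversion st; subst; eexists; eassumption.
Qed.

Lemma fv_Lam_Var y z : fv (Lam y (Var z)) = if z == y then [::] else [:: z].
Proof. by rewrite /fv /=; case: (z == y). Qed.

(* Covering: the identity and constant-function rules handle the bodies that
   are variables, the beta rule all other bodies. *)
Lemma prule_Papp_Pc y N ts v :
  cterm (Pc y N ts) -> cterm v -> exists r, prule (Papp (Pc y N ts) v) r.
Proof.
move=> cc cv.
case varN: (is_var N); last by eexists; apply: r_beta; rewrite ?varN.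
case: N varN cc => // z _ cc; move: (cc) => /andP[]; rewrite fv_Lam_Var.
case: (z =P y) => [->|/eqP neq_zy].
- case: ts cc => // cc _ _.
  case: v cv => // [f g /andP[cf cg] | x M ts cx].
  + by eexists; apply: r_id_capp.
  + by eexists; apply: r_id_c.
- case: ts cc => // t1 [] // cc _ /andP[ct1 _].
  case: t1 ct1 cc => // [f g /andP[cf cg] | x M ts cx] _.
  + by eexists; apply: r_k_capp; rewrite // eq_sym.
  + by eexists; apply: r_k_c; rewrite // eq_sym.
Qed.

Lemma not_pnormal_Papp_Pc y N ts v :
  cterm (Pc y N ts) -> cterm v -> ~ pnormal (Papp (Pc y N ts) v).
Proof.
move=> cc cv; apply; have [r rl] := prule_Papp_Pc cc cv.
by exists r; apply: ps_root.
Qed.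

Lemma pnormal_Papp_Papp t1 t2 v :
  cterm v -> pnormal (Papp (Papp t1 t2) v) <-> pnormal (Papp t1 t2).
Proof.
move=> cv; split=> nf [u st]; apply: nf.
- by exists (Papp u v); apply: ps_appl.
- inversion st as [? ? rl | | | | |]; subst.
  + by inversion rl.
  + by eexists; eassumption.
  + by case: (cterm_pnormal cv); eexists; eassumption.
Qed.

Theorem lemma16 (t : pterm) :
  canonical t -> (pnormal t <-> hnormal (back t)).
Proof.
elim=> {t} [x M ts cc | u v cu IH cv].
  by split=> _; [apply: hnormal_Lam | apply: cterm_pnormal].
case: cu IH => [y N ts cc _ | u1 u2 _ _ IH].
  by split=> [/(not_pnormal_Papp_Pc cc cv) | /not_hnormal_App_Lam].
apply: iff_trans (pnormal_Papp_Papp _ _ cv) _.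
exact: iff_trans IH (iff_sym (hnormal_App_App _ _ _)).
Qed.
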